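(* For all $x \in \mathcal{X}$ and $y \in \mathcal{Y}$, $P_{Y|X}(y|x) = P^{(k^* )}_{Y|X}(y|x)$, and consequently $\hat y^{(k^* )}(x) = \hat y_{\mathrm{MAP}}(x)$, where $\hat y_{\mathrm{MAP}}(x) = \arg\max_{y \in \mathcal{Y}} P_{Y|X}(y|x)$.
   Context: $X, Y$ are random variables on finite alphabets with joint distribution $P_{X,Y}$. By the modal decomposition, $P_{X,Y}(x,y) = P_X(x) P_Y(y)\left(1 + \sum_{i=1}^K \sigma_i f_i^*(x) g_i^*(y)\right)$ with $\sigma_1 \ge \dots \ge \sigma_K > 0$ and $\mathbb{E}[f_i^*(X) f_j^*(X)] = \mathbb{E}[g_i^*(Y) g_j^*(Y)] = \mathbb{1}\{i=j\}$; let $f^* = (f_1^*,\dots,f_K^* )^T$. The maximal correlation kernel is $k^*(x,x') = f^{*T}(x)\Lambda_{f^*}^{-1} f^*(x')$, the projection kernel of $\mathrm{span}\{f^*\}$, where $\Lambda_{f^*} = \mathbb{E}[f^*(X) f^{*T}(X)]$. For a kernel $k$, the centered kernel is $\tilde k(x,x') = k(x,x') - \bar k(x) - \bar k(x') + \mathbb{E}_{P_X}[\bar k(X)]$ with $\bar k(x) = \mathbb{E}_{P_X}[k(X,x)]$; the kernelized discriminative model is $P^{(k)}_{Y|X}(y|x) = P_Y(y)\left(1 + \mathbb{E}[\tilde k(X, x) \mid Y = y]\right)$, and $\hat y^{(k)}(x) = \arg\max_{y} P^{(k)}_{Y|X}(y|x)$. *)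

From HB Require Import structures.
From mathcomp Require Import all_boot all_order all_algebra.
Set Implicit Arguments. Unset Strict Implicit. Unset Printing Implicit Defensive.
Import Order.TTheory GRing.Theory Num.Theory.
Local Open Scope ring_scope.

Section Defs.
Variables (R : realFieldType) (X Y : finType).
Variable P : X -> Y -> R.

Definition PX (x : X) : R := \sum_(y : Y) P x y.
Definition PY (y : Y) : R := \sum_(x : X) P x y.

Definition condYX (y : Y) (x : X) : R := P x y / PX x.

Definition EX (h : X -> R) : R := \sum_(x : X) PX x * h x.
Definition condEX (h : X -> R) (y : Y) : R := \sum_(x : X) (P x y / PY y) * h x.

Definition kbar (k : X -> X -> R) (x : X) : R := EX (fun x' => k x' x).
Definition kcent (k : X -> X -> R) (x x' : X) : R :=
  k x x' - kbar k x - kbar k x' + EX (kbar k).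
Definition Pkern (k : X -> X -> R) (y : Y) (x : X) : R :=
  PY y * (1 + condEX (fun x' => kcent k x' x) y).

Definition Lambda (K : nat) (f : 'I_K -> X -> R) : 'M[R]_K :=
  \matrix_(i, j) EX (fun x => f i x * f j x).
Definition projKernel (K : nat) (f : 'I_K -> X -> R) (x x' : X) : R :=
  \sum_(i < K) \sum_(j < K) f i x * invmx (Lambda f) i j * f j x'.

Definition is_argmax (F : Y -> R) (y : Y) : Prop := forall y' : Y, F y' <= F y.
End Defs.

(* The modal decomposition makes the features f_i centered (marginalise the
   joint law over x and use the linear independence of the orthonormal g_i) and
   orthonormal, so the maximal correlation kernel is already centered and equals
   sum_i f_i(x) f_i(x').  Its conditional mean given Y = y is then
   sum_i f_i(x) E[f_i(X) | Y = y] = sum_i sigma_i f_i(x) g_i(y), which turns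
   the kernelized model into
   P_Y(y) (1 + sum_i sigma_i f_i(x) g_i(y)) = P_{Y|X}(y|x).
   Equal scores have equal maximizers. *)
From HB Require Import structures.
From mathcomp Require Import all_boot all_order all_algebra.
From mathcomp Require Import ring.
Set Implicit Arguments.
Unset Strict Implicit.
Unset Printing Implicit Defensive.
Import Order.TTheory GRing.Theory Num.Theory.
Local Open Scope ring_scope.

Section ModalDecomposition.
Variables (R : idomainType) (A B : finType) (pa : A -> R) (pb : B -> R).
Variables (Q : A -> B -> R) (K : nat) (sigma : 'I_K -> R).
Variables (u : 'I_K -> A -> R) (v : 'I_K -> B -> R).

Hypothesis u_orthonormal :
  forall i j, \sum_a pa a * u i a * u j a = (i == j)%:R.

Lemma orthonormal_coord (w : 'I_K -> R) j :
  \sum_a pa a * u j a * (\sum_(i < K) w i * u i a) = w j.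
Proof.
rewrite (eq_bigr (fun a => \sum_(i < K) w i * (pa a * u j a * u i a))); last first.
  by move=> a _; rewrite mulr_sumr; apply: eq_bigr => i _; ring.
rewrite exchange_big /= (bigD1 j) //= -mulr_sumr u_orthonormal eqxx mulr1.
rewrite big1 ?addr0 // => i neq_ij.
by rewrite -mulr_sumr u_orthonormal eq_sym (negbTE neq_ij) mulr0.
Qed.

Hypothesis Q_modal :
  forall a b, Q a b = pa a * pb b * (1 + \sum_(i < K) sigma i * u i a * v i b).

Lemma modal_moment_l i b :
  \sum_a Q a b * u i a = pb b * (\sum_a pa a * u i a + sigma i * v i b).
Proof.
rewrite mulrDr mulr_sumr -(orthonormal_coord (fun j => sigma j * v j b)).
rewrite mulr_sumr -big_split /=; apply: eq_bigr => a _.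
rewrite Q_modal mulrDr mulr1 mulrDl mulr_sumr mulr_suml; congr (_ + _); first ring.
by rewrite 2!mulr_sumr; apply: eq_bigr => j _; ring.
Qed.

Lemma modal_mean_r :
    \sum_b pb b = 1 -> (forall a, \sum_b Q a b = pa a) ->
    (forall a, pa a != 0) -> (forall i, sigma i != 0) ->
  forall j, \sum_b pb b * v j b = 0.
Proof.
move=> pb_mass1 Q_marginal pa_neq0 sigma_neq0 j.
pose c i := \sum_b pb b * v i b.
have coef0 a : \sum_(i < K) (sigma i * c i) * u i a = 0.
  have marginal : \sum_b Q a b = pa a * (1 + \sum_(i < K) (sigma i * c i) * u i a).
    rewrite /c (eq_bigr (fun b => pa a * pb b +
      \sum_(i < K) pa a * (sigma i * u i a) * (pb b * v i b))) => [|b _];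
      last first.
      rewrite Q_modal mulrDr mulr1 mulr_sumr; congr (_ + _).
      by apply: eq_bigr => i _; ring.
    rewrite big_split /= -mulr_sumr pb_mass1 exchange_big /= mulrDr mulr_sumr.
    by congr (_ + _); apply: eq_bigr => i _; rewrite -mulr_sumr; ring.
  have : pa a * \sum_(i < K) (sigma i * c i) * u i a = 0.
    apply: (addrI (pa a)).
    by rewrite addr0 -{1}[pa a]mulr1 -mulrDr -marginal Q_marginal.
  by move/eqP; rewrite mulf_eq0 (negbTE (pa_neq0 a)) => /eqP.
have : sigma j * c j = 0.
  rewrite -(orthonormal_coord (fun i => sigma i * c i)) big1 // => a _.
  by rewrite coef0 mulr0.
by move/eqP; rewrite mulf_eq0 (negbTE (sigma_neq0 j)) => /eqP.
Qed.

End ModalDecomposition.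

Section KernelizedModel.
Variables (R : realFieldType) (X Y : finType) (P : X -> Y -> R).

Lemma projKernel_orthonormal (K : nat) (f : 'I_K -> X -> R) :
    (forall i j, \sum_x PX P x * f i x * f j x = (i == j)%:R) ->
  forall x x', projKernel P f x x' = \sum_(i < K) f i x * f i x'.
Proof.
move=> f_orthonormal x x'; rewrite /projKernel.
have -> : Lambda P f = 1%:M.
  apply/matrixP => i j; rewrite !mxE /EX -f_orthonormal.
  by apply: eq_bigr => x'' _; rewrite mulrA.
rewrite invmx1; apply: eq_bigr => i _.
rewrite (bigD1 i) //= mxE eqxx mulr1 big1 ?addr0 // => j neq_ji.
by rewrite mxE eq_sym (negbTE neq_ji) mulr0 mul0r.
Qed.

Lemma kbar_feature_kernel (K : nat) (f : 'I_K -> X -> R) (k : X -> X -> R) :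
    (forall x x', k x x' = \sum_(i < K) f i x * f i x') ->
    (forall i, EX P (f i) = 0) ->
  forall x, kbar P k x = 0.
Proof.
move=> kE f_centered x; rewrite /kbar /EX.
under eq_bigr do rewrite kE mulr_sumr.
rewrite exchange_big big1 // => i _.
rewrite (eq_bigr (fun x' => f i x * (PX P x' * f i x'))); last by move=> x' _; ring.
by rewrite -mulr_sumr -/(EX P (f i)) f_centered mulr0.
Qed.

Lemma kcent_kbar0 (k : X -> X -> R) :
  (forall x, kbar P k x = 0) -> forall x x', kcent P k x x' = k x x'.
Proof.
move=> kbar0 x x'; rewrite /kcent !kbar0 !subr0 /EX big1 ?addr0 // => x'' _.
by rewrite kbar0 mulr0.
Qed.

Lemma eq_is_argmax (F G : Y -> R) (y : Y) :
  F =1 G -> is_argmax F y <-> is_argmax G y.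
Proof.
by move=> eqFG; split=> argmax y'; [rewrite -!eqFG | rewrite !eqFG]; exact: argmax.
Qed.

End KernelizedModel.

Section MaximalCorrelationKernel.
Variables (R : realFieldType) (X Y : finType) (P : X -> Y -> R).
Variables (K : nat) (sigma : 'I_K -> R) (f : 'I_K -> X -> R) (g : 'I_K -> Y -> R).

Hypothesis P_mass1 : \sum_x \sum_y P x y = 1.
Hypothesis PX_gt0 : forall x, 0 < PX P x.
Hypothesis PY_gt0 : forall y, 0 < PY P y.
Hypothesis sigma_gt0 : forall i, 0 < sigma i.
Hypothesis f_orthonormal :
  forall i j, \sum_x PX P x * f i x * f j x = (i == j)%:R.
Hypothesis g_orthonormal :
  forall i j, \sum_y PY P y * g i y * g j y = (i == j)%:R.
Hypothesis P_modal : forall x y,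
  P x y = PX P x * PY P y * (1 + \sum_(i < K) sigma i * f i x * g i y).

Lemma f_centered i : EX P (f i) = 0.
Proof.
apply: (modal_mean_r (Q := fun y x => P x y) (sigma := sigma) g_orthonormal) => //.
- by move=> y x; rewrite P_modal [PX P x * _]mulrC; under eq_bigr do rewrite mulrAC.
- by move=> y; rewrite gt_eqF.
- by move=> j; rewrite gt_eqF.
Qed.

Lemma condEX_feature i y : condEX P (f i) y = sigma i * g i y.
Proof.
rewrite /condEX (eq_bigr (fun x => (PY P y)^-1 * (P x y * f i x))); last first.
  by move=> x _; rewrite mulrAC mulrC.
rewrite -mulr_sumr (modal_moment_l f_orthonormal P_modal) [X in X + _]f_centered.
by rewrite add0r mulKf ?gt_eqF.
Qed.

Lemma condYX_Pkern x y : condYX P y x = Pkern P (projKernel P f) y x.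
Proof.
have kE := projKernel_orthonormal f_orthonormal.
have kbar0 := kbar_feature_kernel kE f_centered.
have kernel_mean : condEX P (fun x' => kcent P (projKernel P f) x' x) y =
                   \sum_(i < K) sigma i * f i x * g i y.
  rewrite /condEX (eq_bigr (fun x' =>
    \sum_(i < K) f i x * (P x' y / PY P y * f i x'))) => [|x' _]; last first.
    by rewrite kcent_kbar0 // kE mulr_sumr; apply: eq_bigr => i _; ring.
  rewrite exchange_big; apply: eq_bigr => i _.
  by rewrite -mulr_sumr -/(condEX P (f i) y) condEX_feature; ring.
rewrite /Pkern kernel_mean /condYX P_modal.
by field; rewrite gt_eqF.
Qed.

End MaximalCorrelationKernel.

Theorem mainTheorem4 (R : realFieldType) (X Y : finType) (P : X -> Y -> R)
  (K : nat) (sigma : 'I_K -> R) (f : 'I_K -> X -> R) (g : 'I_K -> Y -> R) :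
  (forall x y, 0 <= P x y) ->
  \sum_(x : X) \sum_(y : Y) P x y = 1 ->
  (forall x, 0 < PX P x) ->
  (forall y, 0 < PY P y) ->
  (forall i j : 'I_K, (i <= j)%N -> sigma j <= sigma i) ->
  (forall i, 0 < sigma i) ->
  (forall i j : 'I_K, \sum_(x : X) PX P x * f i x * f j x = (i == j)%:R) ->
  (forall i j : 'I_K, \sum_(y : Y) PY P y * g i y * g j y = (i == j)%:R) ->
  (forall x y, P x y =
     PX P x * PY P y * (1 + \sum_(i < K) sigma i * f i x * g i y)) ->
  (forall x y, condYX P y x = Pkern P (projKernel P f) y x) /\
  (forall x y, is_argmax (fun y' => Pkern P (projKernel P f) y' x) y <->
               is_argmax (fun y' => condYX P y' x) y).
Proof.
move=> _ P_mass1 PX_gt0 PY_gt0 _ sigma_gt0 f_orthonormal g_orthonormal P_modal.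
have model_exact := condYX_Pkern P_mass1 PX_gt0 PY_gt0 sigma_gt0
  f_orthonormal g_orthonormal P_modal.
by split=> // x y; apply: eq_is_argmax => y'; rewrite model_exact.
Qed.
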